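(* Let $\mathcal{B}_a\subset\mathbb{R}^6$ be the set of all $(a,b,c,d,e,f)$ such that the Type $\mathcal{B}$ model $\mathcal{N}(a,b,c,d,e,f)$ has symmetric Ricci tensor $\rho_s=0$ but alternating Ricci tensor $\rho_a\neq0$. Define $\mathcal{V}_1(r,s,t):=(s,t,r,0,0,r)$ and $\mathcal{V}_2(u,v,w):=(1-2uw+vw^2,\ w(1-uw+vw^2),\ u-vw,\ -vw^2,\ v,\ u+vw)$, and let $\mathcal{D}_1$ be the range of $\mathcal{V}_1$ restricted to $r\neq0$ and $\mathcal{D}_2$ the range of $\mathcal{V}_2$ restricted to $u\neq0$. Then $\mathcal{B}_a=\mathcal{D}_1\cup\mathcal{D}_2$, and $\mathcal{V}_1$ (for $r\neq0$) and $\mathcal{V}_2$ (for $u\neq0$) define smoothly embedded $3$-dimensional submanifolds of $\mathbb{R}^6$ which intersect transversally along a smooth $2$-dimensional submanifold.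
   Context: For $(a,b,c,d,e,f)\in\mathbb{R}^6$, the Type $\mathcal{B}$ model $\mathcal{N}(a,b,c,d,e,f)$ is $(\mathbb{R}^+\times\mathbb{R},\nabla)$ where $\nabla$ is the torsion free connection with Christoffel symbols ($\nabla_{\partial_{x^i}}\partial_{x^j}=\Gamma_{ij}{}^k\partial_{x^k}$) $\Gamma_{11}{}^1=a/x^1$, $\Gamma_{11}{}^2=b/x^1$, $\Gamma_{12}{}^1=\Gamma_{21}{}^1=c/x^1$, $\Gamma_{12}{}^2=\Gamma_{21}{}^2=d/x^1$, $\Gamma_{22}{}^1=e/x^1$, $\Gamma_{22}{}^2=f/x^1$. Its Ricci tensor is $\rho=(x^1)^{-2}\begin{pmatrix}(a-d+1)d+b(f-c) & cd-be+f\\ c(d-1)-be & -c^2+fc+(a-d-1)e\end{pmatrix}$ (rows/columns indexed by $1,2$). The symmetric and alternating parts are $\rho_s(X,Y)=\frac12(\rho(X,Y)+\rho(Y,X))$ and $\rho_a(X,Y)=\frac12(\rho(X,Y)-\rho(Y,X))$. *)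

From HB Require Import structures.
From mathcomp Require Import all_boot all_order all_algebra.
From mathcomp Require Import all_classical all_reals all_analysis.
Set Implicit Arguments. Unset Strict Implicit. Unset Printing Implicit Defensive.
Import Order.TTheory GRing.Theory Num.Theory.
Import numFieldNormedType.Exports.
Local Open Scope classical_set_scope.
Local Open Scope ring_scope.

Section TypeB.
Variable R : realType.

Definition crd (n : nat) (p : 'rV[R]_n.+1) (i : nat) : R := p ord0 (inord i).

(* Ricci tensor of N(a,b,c,d,e,f) at a point with first coordinate x1 > 0
   (it does not depend on x2). *)
Definition ricci (p : 'rV[R]_6) (x1 : R) : 'M[R]_2 :=
  let a := crd p 0 in let b := crd p 1 in let c := crd p 2 in
  let d := crd p 3 in let e := crd p 4 in let f := crd p 5 in
  (x1 ^- 2) *: \matrix_(i < 2, j < 2)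
     (if (i == 0 :> nat) && (j == 0 :> nat) then (a - d + 1) * d + b * (f - c)
      else if (i == 0 :> nat) then c * d - b * e + f
      else if (j == 0 :> nat) then c * (d - 1) - b * e
      else - c ^+ 2 + f * c + (a - d - 1) * e).

Definition ricci_s (p : 'rV[R]_6) (x1 : R) : 'M[R]_2 :=
  2^-1 *: (ricci p x1 + (ricci p x1)^T).
Definition ricci_a (p : 'rV[R]_6) (x1 : R) : 'M[R]_2 :=
  2^-1 *: (ricci p x1 - (ricci p x1)^T).

Definition Ba : set 'rV[R]_6 :=
  [set p | (forall x1, 0 < x1 -> ricci_s p x1 = 0) /\
           (exists x1, 0 < x1 /\ ricci_a p x1 != 0)].

Definition row6 (l : seq R) : 'rV[R]_6 := \row_(i < 6) nth 0 l i.

Definition V1 (x : 'rV[R]_3) : 'rV[R]_6 :=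
  let r := crd x 0 in let s := crd x 1 in let t := crd x 2 in
  row6 [:: s; t; r; 0; 0; r].

Definition V2 (x : 'rV[R]_3) : 'rV[R]_6 :=
  let u := crd x 0 in let v := crd x 1 in let w := crd x 2 in
  row6 [:: 1 - 2 * u * w + v * w ^+ 2; w * (1 - u * w + v * w ^+ 2);
           u - v * w; - (v * w ^+ 2); v; u + v * w].

Definition U1 : set 'rV[R]_3 := [set x | crd x 0 != 0].
Definition U2 : set 'rV[R]_3 := [set x | crd x 0 != 0].

Definition D1 : set 'rV[R]_6 := V1 @` U1.
Definition D2 : set 'rV[R]_6 := V2 @` U2.

Fixpoint Cn_on (m k : nat) (n : nat) (U : set 'rV[R]_m) (f : 'rV[R]_m -> 'rV[R]_k)
  : Prop :=
  match n with
  | 0 => forall x, U x -> {for x, continuous f}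
  | n'.+1 => (forall x, U x -> differentiable f x) /\
             (forall v, Cn_on n' U ('D_v f))
  end.

Definition smooth_on (m k : nat) (U : set 'rV[R]_m) (f : 'rV[R]_m -> 'rV[R]_k) :=
  forall n, Cn_on n U f.

(* smooth embedding of an open set U of R^m into R^k: smooth, injective,
   immersive (Jacobian of full rank m), homeomorphism onto its image *)
Definition smooth_embedding (m k : nat) (U : set 'rV[R]_m)
  (phi : 'rV[R]_m -> 'rV[R]_k) : Prop :=
  [/\ open U, smooth_on U phi,
      (forall x y, U x -> U y -> phi x = phi y -> x = y),
      (forall x, U x -> \rank ('J phi x) = m) &
      (forall x, U x -> forall eps : R, 0 < eps -> exists2 delta : R, 0 < delta &
          forall y, U y -> `|phi y - phi x| < delta -> `|y - x| < eps)].

Definition submanifold (m k : nat) (S : set 'rV[R]_k) : Prop :=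
  forall p, S p -> exists (U : set 'rV[R]_m) (phi : 'rV[R]_m -> 'rV[R]_k)
    (O : set 'rV[R]_k),
    [/\ smooth_embedding U phi, open O, O p & phi @` U = S `&` O].

End TypeB.

From HB Require Import structures.
From mathcomp Require Import all_boot all_order all_algebra.
From mathcomp Require Import all_classical all_reals all_analysis.
From mathcomp Require Import ring lra.
Import Order.TTheory GRing.Theory Num.Theory.
Import numFieldNormedType.Exports.
Local Open Scope classical_set_scope.
Local Open Scope ring_scope.
Set Implicit Arguments. Unset Strict Implicit.

(* The Ricci tensor of N(a,b,c,d,e,f) is (x^1)^-2 times a constant matrix, so rho_s = 0 is
   a system of three polynomial equations in (a,...,f), and rho_a <> 0 means c + f <> 0.
   For e = 0 the system forces d = 0 and f = c, which is the family V1; for e <> 0 it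
   determines a, b, d from (u, v, w) = ((c + f) / 2, e, (f - c) / (2 e)), which is the
   family V2. Both parametrizations are polynomial, hence smooth, have Jacobians of full
   rank and rational left inverses that are continuous on U1 resp. U2, so they are
   embeddings. A point of D2 lies in D1 exactly when v = 0, so D1 and D2 meet along the
   surface (u, w) |-> V2(u, 0, w); there the two tangent spaces span a 4-dimensional
   space, hence intersect in dimension 3 + 3 - 4 = 2. *)

Section PolynomialExpressions.
Variables (R : realType) (m : nat).

Inductive polyexpr :=
  | PConst of R
  | PVar of 'I_m
  | PAdd of polyexpr & polyexpr
  | PMul of polyexpr & polyexpr.

Fixpoint peval (p : polyexpr) (x : 'rV[R]_m) : R :=
  match p with
  | PConst c => c
  | PVar i => x ord0 i
  | PAdd p q => peval p x + peval q x
  | PMul p q => peval p x * peval q x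
  end.

Fixpoint pderiv (v : 'rV[R]_m) (p : polyexpr) : polyexpr :=
  match p with
  | PConst _ => PConst 0
  | PVar i => PConst (v ord0 i)
  | PAdd p q => PAdd (pderiv v p) (pderiv v q)
  | PMul p q => PAdd (PMul p (pderiv v q)) (PMul (pderiv v p) q)
  end.

Lemma differentiable_peval p x : differentiable (peval p) x.
Proof.
elim: p => [c|i|p IHp q IHq|p IHp q IHq] /=.
- exact: differentiable_cst.
- exact: differentiable_coord.
- exact: differentiableD.
- exact: differentiableM.
Qed.

Lemma derive_peval p x v : 'D_v (peval p) x = peval (pderiv v p) x.
Proof.
have derivable_peval q : derivable (peval q) x v.
  exact: diff_derivable (differentiable_peval q x).
elim: p => [c|i|p IHp q IHq|p IHp q IHq] /=.
- exact: derive_cst.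
- have := congr1 (fun M : 'rV[R]_m => M ord0 i) (derive_mx (@derivable_id _ _ x v)).
  by rewrite derive_id /= mxE.
- change ('D_v (peval p + peval q) x = peval (pderiv v p) x + peval (pderiv v q) x).
  by rewrite deriveD ?IHp ?IHq.
- change ('D_v (peval p * peval q) x =
    peval p x * peval (pderiv v q) x + peval (pderiv v p) x * peval q x).
  rewrite (deriveM (derivable_peval p) (derivable_peval q)) IHp IHq.
  by congr (_ + _); exact: mulrC.
Qed.

Lemma nth_pderiv v ps n :
  nth (PConst 0) (map (pderiv v) ps) n = pderiv v (nth (PConst 0) ps n).
Proof. by elim: ps n => [|p ps IH] [|n] //=. Qed.

End PolynomialExpressions.

Arguments PConst {R m} c%_ring_scope.
Arguments PVar {R m} i.

Declare Scope polyexpr_scope.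
Delimit Scope polyexpr_scope with PE.
Notation "p + q" := (PAdd p q) : polyexpr_scope.
Notation "p * q" := (PMul p q) : polyexpr_scope.
Notation "- p" := (PMul (PConst (-1)) p) : polyexpr_scope.
Notation "p - q" := (PAdd p (PMul (PConst (-1)) q)) : polyexpr_scope.

Section RowFunctions.
Variables (R : realType) (V : normedModType R) (k : nat) (f : 'I_k -> V -> R).

Lemma row_fun_sumE :
  (fun x => \row_j f j x) = \sum_(j < k) (fun x => f j x *: (delta_mx 0 j : 'rV[R]_k)).
Proof.
apply: funext => x; rewrite fct_sumE [LHS]row_sum_delta.
by apply: eq_bigr => j _; rewrite mxE.
Qed.

Lemma differentiable_row x :
  (forall j, differentiable (f j) x) -> differentiable (fun x => \row_j f j x) x.
Proof.
move=> df; rewrite row_fun_sumE; apply: differentiable_sum => j.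
exact: differentiableZl.
Qed.

Lemma continuous_row x :
  (forall j, {for x, continuous (f j)}) -> {for x, continuous (fun x => \row_j f j x)}.
Proof.
move=> cf; rewrite row_fun_sumE.
apply: (big_ind (fun g : V -> 'rV[R]_k => {for x, continuous g})).
- exact: cst_continuous.
- by move=> g h cg ch; exact: continuousD.
- by move=> j _; exact: continuousZr_tmp.
Qed.

End RowFunctions.

Section PolynomialMaps.
Variables (R : realType) (m k : nat).
Implicit Types (Ps N D : seq (polyexpr R m)) (U : set 'rV[R]_m).

Definition polymap Ps (x : 'rV[R]_m) : 'rV[R]_k :=
  \row_j peval (nth (PConst 0) Ps j) x.

(* Missing entries of [D] default to the denominator 1. *)
Definition ratmap N D (x : 'rV[R]_m) : 'rV[R]_k :=
  \row_j (peval (nth (PConst 0) N j) x / peval (nth (PConst 1) D j) x).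

Lemma differentiable_polymap Ps x : differentiable (polymap Ps) x.
Proof. by apply: differentiable_row => j; exact: differentiable_peval. Qed.

Lemma derive_polymap Ps x v : 'D_v (polymap Ps) x = polymap (map (pderiv v) Ps) x.
Proof.
rewrite derive_mx; last exact: diff_derivable (differentiable_polymap _ _).
apply/matrixP => i j; rewrite !mxE nth_pderiv -derive_peval; congr ('D_v _ x).
by apply: funext => y; rewrite mxE.
Qed.

Lemma smooth_polymap U Ps : smooth_on U (polymap Ps).
Proof.
move=> n; elim: n Ps => [|n IH] Ps /=.
  by move=> x _; exact/differentiable_continuous/differentiable_polymap.
split=> [x _|v]; first exact: differentiable_polymap.
have -> : 'D_v (polymap Ps) = polymap (map (pderiv v) Ps).
  by apply: funext => x; exact: derive_polymap.
exact: IH.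
Qed.

Lemma jacobian_polymap Ps x i j :
  'J (polymap Ps) x i j = peval (pderiv (delta_mx 0 i) (nth (PConst 0) Ps j)) x.
Proof.
rewrite /jacobian /lin1_mx mxE -deriveE; last exact: differentiable_polymap.
by rewrite derive_polymap mxE nth_pderiv.
Qed.

Lemma continuous_ratmap N D x :
  (forall j : 'I_k, peval (nth (PConst 1) D j) x != 0) -> {for x, continuous (ratmap N D)}.
Proof.
move=> D_neq0; apply: continuous_row => j.
apply: continuousM; first exact/differentiable_continuous/differentiable_peval.
exact/continuousV/differentiable_continuous/differentiable_peval.
Qed.

End PolynomialMaps.

Arguments polymap {R m k} Ps x.
Arguments ratmap {R m k} N D x.

Section SmoothEmbeddings.
Variable R : realType.

Lemma smooth_embedding_of_left_inverse m k (U : set 'rV[R]_m)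
    (f : 'rV[R]_m -> 'rV[R]_k) (g : 'rV[R]_k -> 'rV[R]_m) :
  open U -> smooth_on U f ->
  (forall x, U x -> g (f x) = x) ->
  (forall x, U x -> {for f x, continuous g}) ->
  (forall x, U x -> \rank ('J f x) = m) ->
  smooth_embedding U f.
Proof.
move=> oU sf gK cg rk; split=> // [x y Ux Uy fxy|x Ux eps eps_gt0].
  by rewrite -(gK x Ux) -(gK y Uy) fxy.
have [delta delta_gt0 near_fx] :=
  (nbhs_normP _ _).1 ((cvgrPdist_lt _ _).1 (cg x Ux) eps eps_gt0).
exists delta => // y Uy fyx; have := near_fx (f y).
by rewrite /= !gK // distrC => /(_ fyx); rewrite distrC.
Qed.

Lemma submanifold_image m k (U : set 'rV[R]_m) (f : 'rV[R]_m -> 'rV[R]_k) :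
  smooth_embedding U f -> submanifold m (f @` U).
Proof.
move=> emb p _; exists U, f, setT; split => //; first exact: openT.
by rewrite setIT.
Qed.

Lemma open_crd_neq0 n i : open [set x : 'rV[R]_n.+1 | crd x i != 0].
Proof.
apply: (@open_comp _ _ (fun x : 'rV[R]_n.+1 => x ord0 (inord i)) [set r | r != 0]).
  by move=> x _; exact: coord_continuous.
exact: open_neq.
Qed.

End SmoothEmbeddings.

Section Coordinates.
Variable R : realType.

Definition row3 (l : seq R) : 'rV[R]_3 := \row_(i < 3) nth 0 l i.
Definition row2 (l : seq R) : 'rV[R]_2 := \row_(i < 2) nth 0 l i.

Lemma inord_eq n (i : 'I_n.+1) k : (k <= n)%N -> (inord k == i) = (k == i).
Proof. by move=> le_kn; rewrite -val_eqE /= inordK. Qed.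

Lemma crd_row n (l : seq R) i : (i <= n)%N ->
  crd (\row_(j < n.+1) nth 0 l j) i = nth 0 l i.
Proof. by move=> le_in; rewrite /crd mxE inordK. Qed.

Lemma row_mkseq_crd n (x : 'rV[R]_n.+1) : \row_(i < n.+1) nth 0 (mkseq (crd x) n.+1) i = x.
Proof. by apply/rowP => i; rewrite mxE nth_mkseq // /crd inord_val. Qed.

Lemma row2_ind (P : 'rV[R]_2 -> Prop) :
  (forall u w, P (row2 [:: u; w])) -> forall x, P x.
Proof. by move=> IH x; rewrite -[x]row_mkseq_crd; exact: IH. Qed.

Lemma row3_ind (P : 'rV[R]_3 -> Prop) :
  (forall r s t, P (row3 [:: r; s; t])) -> forall x, P x.
Proof. by move=> IH x; rewrite -[x]row_mkseq_crd; exact: IH. Qed.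

Lemma row6_ind (P : 'rV[R]_6 -> Prop) :
  (forall a b c d e f, P (row6 [:: a; b; c; d; e; f])) -> forall x, P x.
Proof. by move=> IH x; rewrite -[x]row_mkseq_crd; exact: IH. Qed.

Lemma V1_row3 r s t : V1 (row3 [:: r; s; t]) = row6 [:: s; t; r; 0; 0; r].
Proof. by rewrite /V1 !crd_row. Qed.

Lemma V2_row3 u v w : V2 (row3 [:: u; v; w]) =
  row6 [:: 1 - 2 * u * w + v * w ^+ 2; w * (1 - u * w + v * w ^+ 2);
           u - v * w; - (v * w ^+ 2); v; u + v * w].
Proof. by rewrite /V2 !crd_row. Qed.

Lemma U1_row3 r s t : U1 (row3 [:: r; s; t]) = (r != 0).
Proof. by rewrite /U1 /= crd_row. Qed.

Lemma U2_row3 u v w : U2 (row3 [:: u; v; w]) = (u != 0).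
Proof. by rewrite /U2 /= crd_row. Qed.

End Coordinates.

Section TwoByTwo.
Variable R : realFieldType.
Implicit Type M : 'M[R]_2.

Lemma ord2_cases (i : 'I_2) : i = 0 \/ i = 1.
Proof. by case: i => -[|[|//]] ?; [left|right]; exact: val_inj. Qed.

Lemma scale_inv2_eq0 m n (A : 'M[R]_(m, n)) : 2^-1 *: A = 0 <-> A = 0.
Proof.
split=> [/eqP|->]; last exact: scaler0.
by rewrite scaler_eq0 invr_eq0 pnatr_eq0 => /eqP.
Qed.

Lemma sym_part_eq0 M :
  2^-1 *: (M + M^T) = 0 <-> [/\ M 0 0 = 0, M 0 1 + M 1 0 = 0 & M 1 1 = 0].
Proof.
rewrite scale_inv2_eq0; split=> [/matrixP M_sym | [M00 M01 M11]].
  have := M_sym 0 0; have := M_sym 0 1; have := M_sym 1 1; rewrite !mxE.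
  by split; lra.
apply/matrixP => i j; rewrite !mxE.
by case: (ord2_cases i) (ord2_cases j) => -> [] ->; rewrite ?mxE; lra.
Qed.

Lemma alt_part_eq0 M : 2^-1 *: (M - M^T) = 0 <-> M 0 1 = M 1 0.
Proof.
rewrite scale_inv2_eq0; split=> [/matrixP M_alt | M01].
  by have := M_alt 0 1; rewrite !mxE; lra.
apply/matrixP => i j; rewrite !mxE.
by case: (ord2_cases i) (ord2_cases j) => -> [] ->; rewrite ?mxE; lra.
Qed.

End TwoByTwo.

Section Ricci.
Variable R : realType.
Implicit Type p : 'rV[R]_6.

Lemma ricci_scale p x1 : ricci p x1 = x1 ^- 2 *: ricci p 1.
Proof. by rewrite [ricci p 1]/ricci expr1n invr1 scale1r. Qed.

Lemma ricci_s_scale p x1 : ricci_s p x1 = x1 ^- 2 *: ricci_s p 1.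
Proof. by apply/matrixP => i j; rewrite /ricci_s (ricci_scale p x1) !mxE; ring. Qed.

Lemma ricci_a_scale p x1 : ricci_a p x1 = x1 ^- 2 *: ricci_a p 1.
Proof. by apply/matrixP => i j; rewrite /ricci_a (ricci_scale p x1) !mxE; ring. Qed.

Lemma BaE p : Ba p <-> ricci_s p 1 = 0 /\ ricci_a p 1 <> 0.
Proof.
have scale_eq0 x1 (A : 'M[R]_2) : 0 < x1 -> (x1 ^- 2 *: A == 0) = (A == 0).
  by move=> x1_gt0; rewrite scaler_eq0 invr_eq0 expf_eq0 gt_eqF.
split=> [[sym0 [x1 [x1_gt0 alt_neq0]]] | [sym0 alt_neq0]].
  split; first exact: sym0 1 ltr01.
  by apply/eqP; rewrite -(scale_eq0 x1) // -ricci_a_scale.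
split=> [x1 x1_gt0|]; last by exists 1; split; [exact: ltr01 | apply/eqP].
by apply/eqP; rewrite ricci_s_scale scale_eq0 // sym0.
Qed.

Lemma Ba_row6 (a b c d e f : R) : Ba (row6 [:: a; b; c; d; e; f]) <->
  [/\ (a - d + 1) * d + b * (f - c) = 0, c * (2 * d - 1) - 2 * b * e + f = 0,
      - c ^+ 2 + f * c + (a - d - 1) * e = 0 & c + f != 0].
Proof.
rewrite BaE /ricci_s /ricci_a sym_part_eq0 alt_part_eq0 /ricci /row6 !mxE !crd_row //=.
rewrite expr1n invr1 !mul1r.
split=> [[[E11 E12 E22] alt] | [E11 E12 E22 cf]].
  split=> //; first lra.
  by apply/eqP => cf; apply: alt; lra.
split; first by split=> //; lra.
by move=> alt; move/eqP: cf; apply; lra.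
Qed.

End Ricci.

Section TypeBaSolutions.
Variable R : realType.
Implicit Types a b c d e f : R.
Local Notation Ba := (@Ba R).
Local Notation D1 := (@D1 R).
Local Notation D2 := (@D2 R).

Lemma Ba_D1 a b c d f : Ba (row6 [:: a; b; c; d; 0; f]) -> D1 (row6 [:: a; b; c; d; 0; f]).
Proof.
move=> /Ba_row6[_ E2 E3 cf].
have c_neq0 : c != 0.
  by apply: contra cf => /eqP c0; move: E2; rewrite c0 => E2; apply/eqP; lra.
have f_eq : f = c by apply: (mulfI c_neq0); nra.
have d0 : d = 0.
  by apply: (mulfI c_neq0); rewrite mulr0; move: E2; rewrite f_eq; nra.
by exists (row3 [:: c; a; b]); rewrite ?U1_row3 // V1_row3 f_eq d0.
Qed.

Lemma Ba_D2 a b c d e f : e != 0 ->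
  Ba (row6 [:: a; b; c; d; e; f]) -> D2 (row6 [:: a; b; c; d; e; f]).
Proof.
move=> e_neq0 /Ba_row6[E1 E2 E3 cf].
have [two_neq0 four_neq0] : (2 : R) != 0 /\ (4 : R) != 0 by rewrite !pnatr_eq0.
(* [2 e E1 - 2 d E3 + (f - c) E2] eliminates [a] and [b]. *)
have key : 4 * e * d + (f - c) ^+ 2 = 0.
  have -> : 4 * e * d + (f - c) ^+ 2 = 2 * e * ((a - d + 1) * d + b * (f - c))
      - 2 * d * (- c ^+ 2 + f * c + (a - d - 1) * e)
      + (f - c) * (c * (2 * d - 1) - 2 * b * e + f) by ring.
  by rewrite E1 E2 E3; ring.
have solve (x y z : R) : z != 0 -> x * z = y -> x = y / z by move=> z_neq0 <-; rewrite mulfK.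
have d_eq : d = - (f - c) ^+ 2 / (4 * e) by apply: solve; rewrite ?mulf_neq0 //; lra.
have a_eq : a = (e * (1 + d) - c * (f - c)) / e by apply: solve => //; lra.
have b_eq : b = (c * (2 * d - 1) + f) / (2 * e) by apply: solve; rewrite ?mulf_neq0 //; lra.
exists (row3 [:: (c + f) / 2; e; (f - c) / (2 * e)]).
  by rewrite U2_row3 mulf_neq0 ?invr_neq0.
rewrite V2_row3; congr (row6 [:: _; _; _; _; _; _]).
- by rewrite a_eq d_eq; field; rewrite e_neq0.
- by rewrite b_eq d_eq; field; rewrite e_neq0.
- by field.
- by rewrite d_eq; field.
- by field.
Qed.

Lemma D1_sub_Ba : D1 `<=` Ba.
Proof.
move=> _ [x + <-]; elim/row3_ind: x => r s t.
rewrite U1_row3 V1_row3 => r_neq0; apply/Ba_row6; split; try ring.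
by rewrite -mulr2n mulrn_eq0.
Qed.

Lemma D2_sub_Ba : D2 `<=` Ba.
Proof.
move=> _ [x + <-]; elim/row3_ind: x => u v w.
rewrite U2_row3 V2_row3 => u_neq0; apply/Ba_row6; split; try ring.
by rewrite (_ : u - v * w + (u + v * w) = u *+ 2) ?mulrn_eq0 //; ring.
Qed.

Lemma Ba_eq_D1_D2 : Ba = D1 `|` D2.
Proof.
apply/seteqP; split=> [p|p [/D1_sub_Ba|/D2_sub_Ba] //].
elim/row6_ind: p => a b c d e f Bp.
have [e0|e_neq0] := eqVneq e 0; last by right; exact: Ba_D2.
by left; move: Bp; rewrite e0; exact: Ba_D1.
Qed.

End TypeBaSolutions.

Section Parametrizations.
Variable R : realType.
Local Notation V1 := (@V1 R).
Local Notation V2 := (@V2 R).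
Local Notation X2 i := (@PVar R 2 (inord i)).
Local Notation X3 i := (@PVar R 3 (inord i)).

Lemma V1_polymap : V1 = polymap [:: X3 1; X3 2; X3 0; PConst 0; PConst 0; X3 0].
Proof.
apply: funext => x; elim/row3_ind: x => r s t; rewrite V1_row3.
by apply/rowP => -[[|[|[|[|[|[|//]]]]]] ?]; rewrite !mxE //= mxE inordK.
Qed.

Lemma V2_polymap : V2 = polymap
  [:: PConst 1 - PConst 2 * X3 0 * X3 2 + X3 1 * X3 2 * X3 2;
      X3 2 * (PConst 1 - X3 0 * X3 2 + X3 1 * X3 2 * X3 2);
      X3 0 - X3 1 * X3 2; - (X3 1 * X3 2 * X3 2); X3 1; X3 0 + X3 1 * X3 2]%PE.
Proof.
apply: funext => x; elim/row3_ind: x => u v w; rewrite V2_row3.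
by apply/rowP => -[[|[|[|[|[|[|//]]]]]] ?]; rewrite !mxE /= ?mxE ?inordK //=; ring.
Qed.

Definition V12 (z : 'rV[R]_2) : 'rV[R]_6 := V2 (row3 [:: crd z 0; 0; crd z 1]).
Definition U12 : set 'rV[R]_2 := [set z | crd z 0 != 0].

Lemma V12_row2 u w : V12 (row2 [:: u; w]) = V2 (row3 [:: u; 0; w]).
Proof. by rewrite /V12 !crd_row. Qed.

Lemma U12_row2 u w : U12 (row2 [:: u; w]) = (u != 0).
Proof. by rewrite /U12 /= crd_row. Qed.

Lemma V12_polymap : V12 = polymap
  [:: PConst 1 - PConst 2 * X2 0 * X2 1; X2 1 * (PConst 1 - X2 0 * X2 1);
      X2 0; PConst 0; PConst 0; X2 0]%PE.
Proof.
apply: funext => z; elim/row2_ind: z => u w; rewrite V12_row2 V2_row3.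
by apply/rowP => -[[|[|[|[|[|[|//]]]]]] ?]; rewrite !mxE /= ?mxE ?inordK //=; ring.
Qed.

Definition mxseq m n (l : seq (seq R)) : 'M[R]_(m, n) := \matrix_(i, j) nth 0 (nth [::] l i) j.

Definition J1 : 'M[R]_(3, 6) :=
  mxseq 3 6 [:: [:: 0; 0; 1; 0; 0; 1]; [:: 1; 0; 0; 0; 0; 0]; [:: 0; 1; 0; 0; 0; 0]].

Definition J2 (u v w : R) : 'M[R]_(3, 6) := mxseq 3 6
  [:: [:: -2 * w; - w ^+ 2; 1; 0; 0; 1];
      [:: w ^+ 2; w ^+ 3; - w; - w ^+ 2; 1; w];
      [:: -2 * u + 2 * v * w; 1 - 2 * u * w + 3 * v * w ^+ 2; - v; -2 * v * w; 0; v]].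

Definition J12 (u w : R) : 'M[R]_(2, 6) := mxseq 2 6
  [:: [:: -2 * w; - w ^+ 2; 1; 0; 0; 1]; [:: -2 * u; 1 - 2 * u * w; 0; 0; 0; 0]].

Lemma jacobian_V1 x : 'J V1 x = J1.
Proof.
rewrite V1_polymap; apply/matrixP => i j; rewrite jacobian_polymap mxE.
by case: i => -[|[|[|//]]] ? ; case: j => -[|[|[|[|[|[|//]]]]]] ? /=; rewrite ?mxE ?inord_eq.
Qed.

Lemma jacobian_V2 u v w : 'J V2 (row3 [:: u; v; w]) = J2 u v w.
Proof.
rewrite V2_polymap; apply/matrixP => i j; rewrite jacobian_polymap mxE.
case: i => -[|[|[|//]]] ? ; case: j => -[|[|[|[|[|[|//]]]]]] ? /=;
  by rewrite ?mxE ?inord_eq ?inordK //=; ring.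
Qed.

Lemma jacobian_V12 u w : 'J V12 (row2 [:: u; w]) = J12 u w.
Proof.
rewrite V12_polymap; apply/matrixP => i j; rewrite jacobian_polymap mxE.
case: i => -[|[|//]] ? ; case: j => -[|[|[|[|[|[|//]]]]]] ? /=;
  by rewrite ?mxE ?inord_eq ?inordK //=; ring.
Qed.

End Parametrizations.

Lemma rank_right_invertible (F : fieldType) m n (A : 'M[F]_(m, n)) (B : 'M[F]_(n, m)) :
  A *m B = 1%:M -> \rank A = m.
Proof. by move=> AB; apply/eqP/row_freeP; exists B. Qed.

Section TangentSpaces.
Variable R : realType.
Local Notation mxseq := (@mxseq R).
Local Notation J1 := (@J1 R).
Implicit Types u v w : R.

Lemma rank_J1 : \rank J1 = 3.
Proof.
apply: (@rank_right_invertible _ _ _ _ (mxseq 6 3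
  [:: [:: 0; 1; 0]; [:: 0; 0; 1]; [:: 1; 0; 0]; [:: 0; 0; 0]; [:: 0; 0; 0]; [:: 0; 0; 0]])).
apply/matrixP => i j; rewrite !mxE !big_ord_recr big_ord0 /= !mxE.
by case: i => -[|[|[|//]]] ?; case: j => -[|[|[|//]]] ? /=; ring.
Qed.

Lemma rank_J2 u v w : u != 0 -> \rank (J2 u v w) = 3.
Proof.
move=> u_neq0.
apply: (@rank_right_invertible _ _ _ _ (mxseq 6 3
  [:: [:: 0; 0; (-2 * u)^-1]; [:: 0; 0; 0]; [:: 2^-1; 0; w / (-2 * u)];
      [:: 0; 0; (-2 * u)^-1]; [:: 0; 1; 0]; [:: 2^-1; 0; w / (-2 * u)]])).
apply/matrixP => i j; rewrite !mxE !big_ord_recr big_ord0 /= !mxE.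
case: i => -[|[|[|//]]] ?; case: j => -[|[|[|//]]] ? /=;
  by field; rewrite ?mulf_neq0 ?oppr_eq0.
Qed.

Lemma rank_J12 u w : u != 0 -> \rank (J12 u w) = 2.
Proof.
move=> u_neq0.
apply: (@rank_right_invertible _ _ _ _ (mxseq 6 2
  [:: [:: 0; (-2 * u)^-1]; [:: 0; 0]; [:: 1; 2 * w / (-2 * u)];
      [:: 0; 0]; [:: 0; 0]; [:: 0; 0]])).
apply/matrixP => i j; rewrite !mxE !big_ord_recr big_ord0 /= !mxE.
case: i => -[|[|//]] ?; case: j => -[|[|//]] ? /=;
  by field; rewrite ?mulf_neq0 ?oppr_eq0.
Qed.

Lemma rank_J1_plus_J2 u w : \rank (J1 + J2 u 0 w)%MS = 4.
Proof.
pose C := mxseq 4 6 [:: [:: 0; 0; 1; 0; 0; 1]; [:: 1; 0; 0; 0; 0; 0]; [:: 0; 1; 0; 0; 0; 0];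
  [:: w ^+ 2; w ^+ 3; - w; - w ^+ 2; 1; w]].
have rank_C : \rank C = 4.
  apply: (@rank_right_invertible _ _ _ _ (mxseq 6 4 [:: [:: 0; 1; 0; 0]; [:: 0; 0; 1; 0];
    [:: 1; 0; 0; 0]; [:: 0; 0; 0; 0]; [:: w; - w ^+ 2; - w ^+ 3; 1]; [:: 0; 0; 0; 0]])).
  apply/matrixP => i j; rewrite !mxE !big_ord_recr big_ord0 /= !mxE.
  by case: i => -[|[|[|[|//]]]] ?; case: j => -[|[|[|[|//]]]] ? /=; ring.
have J1_C : J1 = mxseq 3 4 [:: [:: 1; 0; 0; 0]; [:: 0; 1; 0; 0]; [:: 0; 0; 1; 0]] *m C.
  apply/matrixP => i j; rewrite !mxE !big_ord_recr big_ord0 /= !mxE.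
  by case: i => -[|[|[|//]]] ?; case: j => -[|[|[|[|[|[|//]]]]]] ? /=; ring.
have J2_C : J2 u 0 w =
    mxseq 3 4 [:: [:: 1; -2 * w; - w ^+ 2; 0]; [:: 0; 0; 0; 1]; [:: 0; -2 * u; 1 - 2 * u * w; 0]] *m C.
  apply/matrixP => i j; rewrite !mxE !big_ord_recr big_ord0 /= !mxE.
  by case: i => -[|[|[|//]]] ?; case: j => -[|[|[|[|[|[|//]]]]]] ? /=; ring.
have C_J : C = mxseq 4 3 [:: [:: 1; 0; 0]; [:: 0; 1; 0]; [:: 0; 0; 1]; [:: 0; 0; 0]] *m J1
             + mxseq 4 3 [:: [:: 0; 0; 0]; [:: 0; 0; 0]; [:: 0; 0; 0]; [:: 0; 1; 0]] *m J2 u 0 w.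
  apply/matrixP => i j; rewrite !mxE !big_ord_recr !big_ord0 /= !mxE.
  by case: i => -[|[|[|[|//]]]] ?; case: j => -[|[|[|[|[|[|//]]]]]] ? /=; ring.
rewrite -rank_C; apply/eqP; rewrite eqn_leq; apply/andP; split; apply: mxrankS.
  by rewrite addsmx_sub J1_C J2_C !submxMl.
by rewrite C_J addmx_sub_adds ?submxMl.
Qed.

Lemma rank_J1_cap_J2 u w : u != 0 -> \rank (J1 :&: J2 u 0 w)%MS = 2.
Proof.
move=> u_neq0; have := mxrank_sum_cap J1 (J2 u 0 w).
rewrite rank_J1_plus_J2 rank_J1 rank_J2 // => sum_cap.
by apply/eqP; rewrite -(eqn_add2l 4) sum_cap.
Qed.

End TangentSpaces.

Section TypeBaEmbeddings.
Variable R : realType.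
Local Notation V1 := (@V1 R).
Local Notation V2 := (@V2 R).
Local Notation U1 := (@U1 R).
Local Notation U2 := (@U2 R).
Local Notation D1 := (@D1 R).
Local Notation D2 := (@D2 R).
Local Notation V12 := (@V12 R).
Local Notation U12 := (@U12 R).
Local Notation X6 i := (@PVar R 6 (inord i)).

Lemma smooth_embedding_V1 : smooth_embedding U1 V1.
Proof.
apply: (smooth_embedding_of_left_inverse (g := ratmap [:: X6 2; X6 0; X6 1] [::])).
- exact: open_crd_neq0.
- by rewrite V1_polymap; exact: smooth_polymap.
- move=> x _; elim/row3_ind: x => r s t; rewrite V1_row3.
  by apply/rowP => -[[|[|[|//]]] ?]; rewrite !mxE /= !mxE !inordK //= divr1.
- by move=> x _; apply: continuous_ratmap => j; rewrite nth_nil oner_neq0.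
- by move=> x _; rewrite jacobian_V1 rank_J1.
Qed.

Lemma smooth_embedding_V2 : smooth_embedding U2 V2.
Proof.
have two_neq0 : (2 : R) != 0 by rewrite pnatr_eq0.
apply: (smooth_embedding_of_left_inverse (g := ratmap
  [:: X6 2 + X6 5; X6 4; PConst 1 - X6 0 - X6 3]%PE [:: PConst 2; PConst 1; X6 2 + X6 5]%PE)).
- exact: open_crd_neq0.
- by rewrite V2_polymap; exact: smooth_polymap.
- move=> x; elim/row3_ind: x => u v w; rewrite U2_row3 V2_row3 => u_neq0.
  apply/rowP => -[[|[|[|//]]] ?]; rewrite !mxE /= !mxE !inordK //= ?divr1 //.
    by rewrite (_ : u - v * w + (u + v * w) = u * 2) ?mulfK //; ring.
  by rewrite (_ : u - v * w + (u + v * w) = 2 * u); [field | ring].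
- move=> x; elim/row3_ind: x => u v w; rewrite U2_row3 V2_row3 => u_neq0.
  apply: continuous_ratmap => -[[|[|[|//]]] ?]; rewrite /= ?mxE ?inordK //=.
  by rewrite (_ : u - v * w + (u + v * w) = 2 * u) ?mulf_neq0 //; ring.
- by move=> x; elim/row3_ind: x => u v w; rewrite U2_row3 jacobian_V2; exact: rank_J2.
Qed.

Lemma smooth_embedding_V12 : smooth_embedding U12 V12.
Proof.
apply: (smooth_embedding_of_left_inverse
  (g := ratmap [:: X6 2; PConst 1 - X6 0]%PE [:: PConst 1; PConst 2 * X6 2]%PE)).
- exact: open_crd_neq0.
- by rewrite V12_polymap; exact: smooth_polymap.
- move=> z; elim/row2_ind: z => u w; rewrite U12_row2 V12_row2 V2_row3 => u_neq0.
  apply/rowP => -[[|[|//]] ?]; rewrite !mxE /= !mxE !inordK //=.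
    by field.
  by rewrite !mul0r subr0; field.
- move=> z; elim/row2_ind: z => u w; rewrite U12_row2 V12_row2 V2_row3 => u_neq0.
  apply: continuous_ratmap => -[[|[|//]] ?]; rewrite /= ?mxE ?inordK //=.
  by rewrite mul0r subr0 mulf_neq0.
- move=> z; elim/row2_ind: z => u w; rewrite U12_row2 => u_neq0.
  by rewrite jacobian_V12 rank_J12.
Qed.

Lemma V1_eq_V2 x u v w : V1 x = V2 (row3 [:: u; v; w]) -> v = 0.
Proof.
elim/row3_ind: x => r s t; rewrite V1_row3 V2_row3.
by move/(congr1 (fun p => crd p 4)); rewrite /row6 !crd_row.
Qed.

Lemma D1_cap_D2 : D1 `&` D2 = V12 @` U12.
Proof.
apply/seteqP; split=> [p [[x _ V1x] [y + V2y]] | _ [z + <-]].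
  elim/row3_ind: y V2y => u v w V2y; rewrite U2_row3 => u_neq0.
  have v0 := V1_eq_V2 (etrans V1x (esym V2y)).
  exists (row2 [:: u; w]); first by rewrite U12_row2.
  by rewrite V12_row2 -V2y v0.
elim/row2_ind: z => u w; rewrite U12_row2 V12_row2 => u_neq0; split.
  exists (row3 [:: u; 1 - 2 * u * w; w * (1 - u * w)]); first by rewrite U1_row3.
  by rewrite V1_row3 V2_row3; congr (row6 [:: _; _; _; _; _; _]); ring.
by exists (row3 [:: u; 0; w]); rewrite ?U2_row3.
Qed.

End TypeBaEmbeddings.

Theorem theorem1p7 (R : realType) :
  @Ba R = @D1 R `|` @D2 R /\
  smooth_embedding (@U1 R) (@V1 R) /\
  smooth_embedding (@U2 R) (@V2 R) /\
  @submanifold R 3 6 (@D1 R) /\ @submanifold R 3 6 (@D2 R) /\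
  @submanifold R 2 6 (@D1 R `&` @D2 R) /\
      (forall x y, @U1 R x -> @U2 R y -> V1 x = V2 y ->
         \rank ('J (@V1 R) x :&: 'J (@V2 R) y)%MS = 2%N).
Proof.
have emb1 := smooth_embedding_V1 R; have emb2 := smooth_embedding_V2 R.
split; first exact: Ba_eq_D1_D2.
do 2 (split; first by []).
split; first exact: submanifold_image emb1.
split; first exact: submanifold_image emb2.
split; first by rewrite D1_cap_D2; exact/submanifold_image/smooth_embedding_V12.
move=> x y _; elim/row3_ind: y => u v w; rewrite U2_row3 => u_neq0 V1x.
by rewrite jacobian_V1 jacobian_V2 (V1_eq_V2 V1x) rank_J1_cap_J2.
Qed.
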